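(* Let $A, M, F \in \mathbb{C}^{n\times n}$ with $M$ and $F$ nonsingular, and let $I$ be the $n\times n$ identity matrix. Define the $2n\times 2n$ matrix \[ Q := \begin{bmatrix} 0 & I - M^{-1}A \\ I - F^{-1}A & 0 \end{bmatrix}. \] If $\rho(|Q|) < 1$, then \[ \rho\left(\left| I - F^{-1}(M + F - A) M^{-1} A \right|\right) < 1. \]
   Context: For a matrix $\mathcal A$, $|\mathcal A|$ denotes the entrywise absolute value (modulus) and $\rho(\mathcal A)$ denotes its spectral radius. *)

From HB Require Import structures.
From mathcomp Require Import all_boot all_order all_algebra.
Set Implicit Arguments. Unset Strict Implicit. Unset Printing Implicit Defensive.
Import Order.TTheory GRing.Theory Num.Theory.
Local Open Scope ring_scope.

Definition mxabs (C : numClosedFieldType) (m n : nat) (A : 'M[C]_(m, n)) :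
  'M[C]_(m, n) := map_mx (fun x => `|x|) A.

(* The eigenvalues of A, listed with algebraic multiplicity: the roots of
   its characteristic polynomial (which splits since C is algebraically
   closed). *)
Definition eigenvalues (C : numClosedFieldType) (n : nat) (A : 'M[C]_n) : seq C :=
  sval (closed_field_poly_normal (char_poly A)).

Definition spectral_radius (C : numClosedFieldType) (n : nat) (A : 'M[C]_n) : C :=
  \big[Num.max/0]_(z <- eigenvalues A) `|z|.

From mathcomp Require Import all_boot all_order all_algebra.
Set Implicit Arguments. Unset Strict Implicit. Unset Printing Implicit Defensive.
Import Order.TTheory GRing.Theory Num.Theory.
Local Open Scope ring_scope.

(* With G := I - F^-1 A and E := I - M^-1 A the matrix of the conclusion is
   G E.  If rho(|G E|) >= 1, the modulus of an eigenvector for an eigenvalue of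
   modulus >= 1 is a nonzero nonnegative row vector w with w <= w |G| |E|, so
   (0, w) satisfies the same inequality for |Q|^2 = diag(|E||G|, |G||E|).
   A nonnegative matrix with such a subinvariant vector has a real eigenvalue
   t >= 1 (a weak form of Perron-Frobenius), and then sqrt t or -sqrt t is an
   eigenvalue of |Q|, contradicting rho(|Q|) < 1.
   The Perron-Frobenius step is proved without analysis: the entries of
   x(t) = (t - K)^-1 1 are quotients of real polynomials and are positive for
   large t.  At the largest real t >= 1 where some entry has a root (or at
   t = 1 if there is none), a sign argument for real polynomials gives
   x(t) >= 0, which is incompatible with w <= w K. *)

Section RealMax.
Variable R : numDomainType.

Lemma bigmax_mem (x0 : R) (s : seq R) : \big[Num.max/x0]_(y <- s) y \in x0 :: s.
Proof.
elim: s => [|a s IH]; rewrite ?big_nil ?mem_head // big_cons maxEle.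
case: ifP => _; last by rewrite !inE eqxx orbT.
by move: IH; rewrite !inE => /orP[->|->]; rewrite ?orbT.
Qed.

Lemma le_bigmax_real (x0 : R) (s : seq R) : {in x0 :: s, forall y, y \is Num.real} ->
  {in x0 :: s, forall y, y <= \big[Num.max/x0]_(z <- s) z}.
Proof.
elim: s => [|a s IH] Rs y; first by rewrite big_nil inE => /eqP ->.
have sub_s : {subset x0 :: s <= x0 :: a :: s}.
  by move=> x; rewrite !inE => /orP[]->; rewrite ?orbT.
rewrite big_cons maxEle; set m := \big[_/_]_(_ <- _) _.
have Rm : m \is Num.real by apply/Rs/sub_s/bigmax_mem.
have Ra : a \is Num.real by apply: Rs; rewrite !inE eqxx orbT.
have [-> _|y_ne_a y_in] := eqVneq y a; first by case: ifP.
have y_le_m : y <= m.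
  by apply: IH => [x /sub_s/Rs//|]; move: y_in; rewrite !inE (negbTE y_ne_a).
by case: ifP => // /negbT; rewrite -real_ltNge // => /ltW; apply: le_trans.
Qed.

End RealMax.

Lemma max_root_ge (C : numClosedFieldType) (p : {poly C}) (c : C) :
  p != 0 -> c \is Num.real ->
  exists2 tau, c <= tau & (tau = c \/ root p tau) /\ forall t, tau < t -> ~~ root p t.
Proof.
move=> p_neq0 Rc; have [rs pE] := closed_field_poly_normal p.
have mem_rs t : (t \in rs) = root p t by rewrite pE rootZ ?root_prod_XsubC ?lead_coef_eq0.
set L := [seq t <- rs | c <= t].
have RL : {in c :: L, forall t, t \is Num.real}.
  by move=> t; rewrite inE mem_filter => /orP[/eqP->|/andP[/ger_real->]].
have tau_max := le_bigmax_real RL; set tau := \big[_/_]_(_ <- _) _ in tau_max.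
have c_tau : c <= tau by apply/tau_max/mem_head.
exists tau => //; split=> [|t tau_t].
  move: (bigmax_mem c L); rewrite -/tau inE mem_filter -mem_rs.
  by case/orP => [/eqP|/andP[_]]; [left|right].
apply/negP => pt; have : t <= tau.
  by apply/tau_max; rewrite inE mem_filter mem_rs pt (le_trans c_tau (ltW tau_t)) orbT.
by move/(lt_le_trans tau_t); rewrite ltxx.
Qed.

Section SpectralRadius.
Variables (C : numClosedFieldType) (n : nat).
Implicit Type A : 'M[C]_n.

Lemma mem_eigenvalues A z : (z \in eigenvalues A) = eigenvalue A z.
Proof.
rewrite /eigenvalues eigenvalue_root_char; case: closed_field_poly_normal => /= rs ->.
by rewrite rootZ ?root_prod_XsubC // lead_coef_eq0 monic_neq0 ?char_poly_monic.
Qed.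

Lemma spectral_radiusE A :
  spectral_radius A = \big[Num.max/0]_(y <- [seq `|z| | z <- eigenvalues A]) y.
Proof. by rewrite big_map. Qed.

Lemma le_spectral_radius A :
  {in 0 :: [seq `|z| | z <- eigenvalues A], forall y, y <= spectral_radius A}.
Proof.
rewrite spectral_radiusE; apply: le_bigmax_real => y.
by rewrite inE => /orP[/eqP->|/mapP[z _ ->]]; rewrite ?real0 ?normr_real.
Qed.

Lemma spectral_radius_ge0 A : 0 <= spectral_radius A.
Proof. exact/le_spectral_radius/mem_head. Qed.

Lemma norm_eigenvalue_le A z : eigenvalue A z -> `|z| <= spectral_radius A.
Proof.
by rewrite -mem_eigenvalues => Az; apply/le_spectral_radius/mem_behead/map_f.
Qed.

Lemma spectral_radius_eigenvalue A : 0 < spectral_radius A ->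
  exists2 z, eigenvalue A z & `|z| = spectral_radius A.
Proof.
move: (bigmax_mem 0 [seq `|z| | z <- eigenvalues A]); rewrite -spectral_radiusE.
rewrite inE => /orP[/eqP->|/mapP[z Az ->]]; first by rewrite ltxx.
by exists z; rewrite -?mem_eigenvalues.
Qed.

End SpectralRadius.

Lemma real_mul_self_gt0 (R : numDomainType) (x : R) :
  x \is Num.real -> x != 0 -> 0 < x * x.
Proof. by move=> Rx x_neq0; rewrite -expr2 -real_normK // exprn_gt0 // normr_gt0. Qed.

Section RealPolynomials.
Variable C : numClosedFieldType.
Implicit Types (p q D : {poly C}) (a b t z : C).

Lemma polyOver_realE p : (p \is a polyOver Num.real) = (map_poly Num.conj p == p).
Proof.
apply/polyOverP/eqP => [Rp|Ep i]; first by apply/polyP => i; rewrite coef_map /= conj_Creal.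
by rewrite CrealE -{2}Ep coef_map.
Qed.

Lemma polyOver_real_divl p q D :
  p \is a polyOver Num.real -> D \is a polyOver Num.real -> D != 0 -> p = q * D ->
  q \is a polyOver Num.real.
Proof.
rewrite !polyOver_realE => /eqP Rp /eqP RD D_neq0 pE; apply/eqP/(mulIf D_neq0).
by rewrite -{1}RD -rmorphM /= -pE Rp.
Qed.

Lemma root_conj_real p z : p \is a polyOver Num.real -> root p z -> root p z^*.
Proof.
rewrite polyOver_realE => /eqP Ep pz.
by rewrite /root -[p in p.[_]]Ep horner_map (eqP pz) rmorph0.
Qed.

Definition no_sign_change p := forall a b, a \is Num.real -> a <= b ->
  (forall t, a <= t <= b -> ~~ root p t) -> 0 < p.[a] * p.[b].

Lemma no_sign_changeM p q :
  no_sign_change p -> no_sign_change q -> no_sign_change (p * q).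
Proof.
move=> p_sign q_sign a b Ra ab noroot; rewrite !hornerM mulrACA.
by rewrite mulr_gt0 ?p_sign ?q_sign // => t /noroot; rewrite rootM negb_or => /andP[].
Qed.

Lemma no_sign_changeC c : c \is Num.real -> no_sign_change c%:P.
Proof.
move=> Rc a b _ ab noroot; rewrite !hornerC real_mul_self_gt0 //.
by move: (noroot a); rewrite lexx ab rootC => /(_ isT).
Qed.

Lemma no_sign_change_XsubC z : z \is Num.real -> no_sign_change ('X - z%:P).
Proof.
move=> Rz a b Ra ab noroot; rewrite !hornerXsubC.
have [za|az] := real_ltP Rz Ra; first by rewrite mulr_gt0 ?subr_gt0 // (lt_le_trans za ab).
have z_out : ~~ (a <= z <= b) by apply/negP => /noroot; rewrite root_XsubC eqxx.
have bz : b < z by move: z_out; rewrite az real_ltNge // -(ler_real ab).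
by rewrite -mulrNN !opprB mulr_gt0 ?subr_gt0 // (le_lt_trans ab bz).
Qed.

Lemma no_sign_change_conj_pair z : z \notin Num.real ->
  no_sign_change (('X - (z^*)%:P) * ('X - z%:P)).
Proof.
move=> NRz; have pair_gt0 t : t \is Num.real -> 0 < (('X - (z^*)%:P) * ('X - z%:P)).[t].
  move=> Rt; rewrite hornerM !hornerXsubC.
  have -> : t - z^* = (t - z)^* by rewrite rmorphB /= (conj_Creal Rt).
  by rewrite mulrC -normCK exprn_gt0 // normr_gt0 subr_eq0; apply: contraNneq NRz => <-.
by move=> a b Ra ab _; rewrite mulr_gt0 ?pair_gt0 // -(ler_real ab).
Qed.

Lemma real_poly_factor p : p \is a polyOver Num.real -> (1 < size p)%N ->
  exists q D, [/\ p = q * D, q \is a polyOver Num.real, (size q < size p)%N &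
                  no_sign_change D].
Proof.
move=> Rp p_gt1; have p_neq0 : p != 0 by rewrite -size_poly_gt0 ltnW.
have /closed_rootP [z pz] : size p != 1 by rewrite gtn_eqF.
have size_lt q D : p = q * D -> D \is monic -> (1 < size D)%N -> (size q < size p)%N.
  move=> pE D_monic D_gt1.
  have q_neq0 : q != 0 by apply: contraNneq p_neq0 => q0; rewrite pE q0 mul0r.
  by rewrite pE size_Mmonic // ltn_predRL -addn1 ltn_add2l.
have [Rz|NRz] := boolP (z \is Num.real).
  have [q pE] := factor_theorem _ _ pz; exists q, ('X - z%:P); split.
  - exact: pE.
  - by apply: polyOver_real_divl pE; rewrite ?polyOverXsubC ?polyXsubC_eq0.
  - by apply: size_lt pE _ _; rewrite ?monicXsubC ?size_XsubC.
  - exact: no_sign_change_XsubC.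
have [q1 pE1] := factor_theorem _ _ pz.
have q1z' : root q1 z^*.
  by move: (root_conj_real Rp pz); rewrite pE1 rootM root_XsubC -CrealE (negbTE NRz) orbF.
have [q pE2] := factor_theorem _ _ q1z'.
set D := ('X - (z^*)%:P) * ('X - z%:P).
have pE : p = q * D by rewrite pE1 pE2 /D mulrA.
have D_monic : D \is monic by rewrite monicMl ?monicXsubC.
exists q, D; split.
- exact: pE.
- apply: polyOver_real_divl pE; rewrite ?monic_neq0 // polyOver_realE /D.
  by rewrite rmorphM /= !rmorphB /= map_polyX !map_polyC /= conjCK mulrC.
- by apply: size_lt pE D_monic _; rewrite size_Mmonic ?monicXsubC ?polyXsubC_eq0 ?size_XsubC.
- exact: no_sign_change_conj_pair.
Qed.

Lemma real_poly_no_sign_change p : p \is a polyOver Num.real -> no_sign_change p.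
Proof.
elim: {p}(size p).+1 {-2}p (ltnSn (size p)) => // k IH p p_lt Rp.
have [p_le1|p_gt1] := leqP (size p) 1.
  by rewrite (size1_polyC p_le1); apply/no_sign_changeC/(polyOverP Rp).
have [q [D [pE Rq q_lt D_sign]]] := real_poly_factor Rp p_gt1.
by rewrite pE; apply: no_sign_changeM D_sign; exact: IH q (leq_trans q_lt p_lt) Rq.
Qed.

End RealPolynomials.

Lemma nonneg_subeigen_eq0 (R : numDomainType) n (K : 'M[R]_n) (q : 'I_n -> R) t :
  K \is a mxOver Num.nneg -> (forall i, 0 <= q i) ->
  (forall i, t * q i <= \sum_j K i j * q j) -> \sum_i \sum_j K i j < t ->
  forall i, q i = 0.
Proof.
move=> /mxOverP K_ge0 q_ge0 tq_le S_lt_t.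
have K_ge0' i j : 0 <= K i j by rewrite -nnegrE.
set S := \sum_i \sum_j K i j in S_lt_t.
have col_le_S j : \sum_i K i j <= S.
  rewrite /S exchange_big [leRHS](bigD1 j) //= lerDl.
  by apply: sumr_ge0 => k _; apply: sumr_ge0.
have : t * \sum_i q i <= S * \sum_i q i.
  rewrite !mulr_sumr; apply: le_trans (ler_sum _ (fun i _ => tq_le i)) _.
  rewrite exchange_big /=; apply: ler_sum => j _.
  by rewrite -mulr_suml ler_wpM2r.
rewrite -subr_ge0 -mulrBl nmulr_rge0 ?subr_lt0 // => sum_le0 i.
have /eqP : \sum_i q i = 0 by apply/eqP; rewrite eq_le sum_le0 sumr_ge0.
by rewrite psumr_eq0 // => /allP/(_ i (mem_index_enum i)) /implyP/(_ isT)/eqP.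
Qed.

Definition adj_rowsum (R : comNzRingType) n (K : 'M[R]_n) (i : 'I_n) : {poly R} :=
  (\adj (char_poly_mx K) *m (const_mx 1 : 'cV_n)) i 0.

(* The row sums of (t - K)^-1, written as quotients of polynomials in t
   (hence 0 at the eigenvalues t of K). *)
Definition resolvent_rowsum (R : fieldType) n (K : 'M[R]_n) (t : R) (i : 'I_n) : R :=
  (adj_rowsum K i).[t] / (char_poly K).[t].

Lemma horner_adj_rowsum (R : comNzRingType) n (K : 'M[R]_n) t i :
  t * (adj_rowsum K i).[t] - \sum_j K i j * (adj_rowsum K j).[t] = (char_poly K).[t].
Proof.
have E : char_poly_mx K *m (\adj (char_poly_mx K) *m const_mx 1) =
    char_poly K *: (const_mx 1 : 'cV_n).
  by rewrite mulmxA mul_mx_adj mul_scalar_mx.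
have := congr1 (fun B : 'cV_n => (B i 0).[t]) E; rewrite /= !mxE mulr1 => <-.
have cpmE j : char_poly_mx K i j = 'X *+ (i == j) - (K i j)%:P by rewrite !mxE.
rewrite horner_sum.
under [in RHS]eq_bigr => j _ do
  rewrite cpmE hornerM hornerD hornerN hornerMn hornerX hornerC mulrBl.
rewrite sumrB; congr (_ - _).
rewrite (bigD1 i) //= eqxx mulr1n big1 ?addr0 // => j /negbTE.
by rewrite eq_sym => ->; rewrite mulr0n mul0r.
Qed.

Lemma resolvent_rowsumE (R : fieldType) n (K : 'M[R]_n) t i :
  (char_poly K).[t] != 0 ->
  t * resolvent_rowsum K t i - \sum_j K i j * resolvent_rowsum K t j = 1.
Proof.
move=> d_neq0; rewrite /resolvent_rowsum mulrA.
under eq_bigr => j _ do rewrite mulrA.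
by rewrite -mulr_suml -mulrBl horner_adj_rowsum divff.
Qed.

Lemma resolvent_rowsum_sqrE (R : fieldType) n (K : 'M[R]_n) t i :
  resolvent_rowsum K t i * (char_poly K).[t] ^+ 2 = (adj_rowsum K i * char_poly K).[t].
Proof.
rewrite hornerM /resolvent_rowsum; have [->|d_neq0] := eqVneq (char_poly K).[t] 0.
  by rewrite expr0n !mulr0.
by rewrite expr2 mulrA divfK.
Qed.

Section RealMatrices.
Variables (C : numClosedFieldType) (n : nat) (K : 'M[C]_n).
Hypothesis K_real : K \is a mxOver Num.real.

Lemma map_mx_conj_real : map_mx Num.conj K = K.
Proof. by apply/matrixP => i j; rewrite mxE conj_Creal // (mxOverP K_real). Qed.

Lemma char_poly_real : char_poly K \is a polyOver Num.real.
Proof. by rewrite polyOver_realE map_char_poly map_mx_conj_real. Qed.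

Lemma adj_rowsum_real i : adj_rowsum K i \is a polyOver Num.real.
Proof.
rewrite polyOver_realE /adj_rowsum.
have := congr1 (fun B : 'cV_n => B i 0)
  (map_mxM (map_poly Num.conj) (\adj (char_poly_mx K)) (const_mx 1 : 'cV_n)).
rewrite /= [in X in X = _]mxE => ->.
by rewrite map_mx_adj map_char_poly_mx map_mx_conj_real map_const_mx rmorph1.
Qed.

End RealMatrices.

Definition subinvariant (R : numDomainType) n (K : 'M[R]_n) (w : 'rV[R]_n) :=
  [/\ w != 0, w \is a mxOver Num.nneg & forall j, w 0 j <= (w *m K) 0 j].

Section PerronFrobenius.
Variables (C : numClosedFieldType) (n : nat) (K : 'M[C]_n).
Hypothesis K_nneg : K \is a mxOver Num.nneg.

Let K_ge0 i j : 0 <= K i j.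
Proof. by rewrite -nnegrE (mxOverP K_nneg). Qed.

Let K_real : K \is a mxOver Num.real.
Proof. by apply/mxOverP => i j; rewrite ger0_real. Qed.

Local Notation mass := (\sum_i \sum_j K i j).

Let mass_ge0 : 0 <= mass.
Proof. by apply: sumr_ge0 => i _; apply: sumr_ge0. Qed.

Lemma norm_eigenvalue_le_mass z : eigenvalue K z -> `|z| <= mass.
Proof.
case/eigenvalueP => v vK v_neq0; rewrite real_leNgt ?normr_real ?ger0_real //.
apply/negP => mass_lt; move/negP: v_neq0; apply; apply/eqP/rowP => j; rewrite mxE.
have KT_nneg : K^T \is a mxOver Num.nneg by apply/mxOverP => i k; rewrite mxE (mxOverP K_nneg).
apply/normr0_eq0.
apply: (nonneg_subeigen_eq0 KT_nneg (q := fun j => `|v 0 j|) (t := `|z|)) => //.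
- move=> k; have := congr1 (fun X : 'rV_n => X 0 k) vK; rewrite /= !mxE => vKk.
  rewrite -normrM -vKk; apply: le_trans (ler_norm_sum _ _ _) _.
  by apply: ler_sum => i _; rewrite mxE normrM (ger0_norm (K_ge0 i k)) mulrC.
by rewrite exchange_big; under eq_bigr do under eq_bigr do rewrite mxE.
Qed.

Lemma horner_char_poly_neq0 u : mass < u -> (char_poly K).[u] != 0.
Proof.
move=> mass_lt; have u_ge0 : 0 <= u := ltW (le_lt_trans mass_ge0 mass_lt).
apply: contraTN mass_lt => du0; rewrite -real_leNgt ?ger0_real // -(ger0_norm u_ge0).
by apply: norm_eigenvalue_le_mass; rewrite eigenvalue_root_char.
Qed.

Lemma resolvent_rowsum_gt0 u : u \is Num.real -> mass < u ->
  forall i, 0 < resolvent_rowsum K u i.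
Proof.
move=> Ru mass_lt; have u_gt0 : 0 < u := le_lt_trans mass_ge0 mass_lt.
have d_neq0 := horner_char_poly_neq0 mass_lt.
set x := resolvent_rowsum K u.
have Rx j : x j \is Num.real.
  by rewrite rpredM ?rpredV ?rpred_horner ?adj_rowsum_real ?char_poly_real.
have xE j : u * x j = 1 + \sum_k K j k * x k.
  by rewrite -(resolvent_rowsumE j d_neq0) subrK.
have x_nneg : forall j, `|x j| - x j = 0.
  apply: (nonneg_subeigen_eq0 K_nneg _ _ mass_lt) => j.
    by rewrite subr_ge0 real_ler_norm.
  under eq_bigr do rewrite mulrBr.
  rewrite mulrBr sumrB xE opprD addrA lerD2r lerBlDl -(ger0_norm (ltW u_gt0)) -normrM xE.
  apply: le_trans (ler_normD _ _) _; rewrite normr1 lerD2l.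
  apply: le_trans (ler_norm_sum _ _ _) _.
  by apply: ler_sum => k _; rewrite normrM (ger0_norm (K_ge0 j k)).
have x_ge0 j : 0 <= x j by rewrite -(subr0_eq (x_nneg j)).
move=> i; rewrite -(pmulr_rgt0 _ u_gt0) xE; apply: lt_le_trans ltr01 _.
by rewrite lerDl sumr_ge0 // => k _; rewrite mulr_ge0.
Qed.

Lemma resolvent_rowsum_ge0 tau : 0 <= tau ->
  (forall t, tau <= t -> (char_poly K).[t] != 0) ->
  (forall i t, tau < t -> ~~ root (adj_rowsum K i) t) ->
  forall i, 0 <= resolvent_rowsum K tau i.
Proof.
move=> tau_ge0 d_neq0 a_noroot i.
have Rtau := ger0_real tau_ge0.
set u := tau + mass + 1.
have tau_u : tau <= u by rewrite /u -addrA lerDl addr_ge0.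
have mass_u : mass < u by rewrite /u -addrA ltr_wpDl // ltrDl.
have d2_gt0 t : tau <= t -> 0 < (char_poly K).[t] ^+ 2.
  move=> tau_t; rewrite expr2 real_mul_self_gt0 ?d_neq0 //.
  by rewrite rpred_horner ?char_poly_real // -(ler_real tau_t).
have [a0|a_neq0] := eqVneq (adj_rowsum K i).[tau] 0.
  by rewrite /resolvent_rowsum a0 mul0r.
(* h.[t] has the sign of x_i(t) and h has no root in [tau, u]. *)
set h := adj_rowsum K i * char_poly K.
have h_sign : 0 < h.[tau] * h.[u].
  apply: real_poly_no_sign_change => //.
    exact: polyOver_mulr_2closed (adj_rowsum_real _ _) (char_poly_real _).
  move=> t /andP[tau_t _]; rewrite rootM negb_or d_neq0 // andbT.
  by have [<-|tau_neq_t] := eqVneq tau t; rewrite ?a_neq0 // a_noroot // lt_neqAle tau_neq_t.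
have hu_gt0 : 0 < h.[u].
  rewrite /h -resolvent_rowsum_sqrE mulr_gt0 ?d2_gt0 ?resolvent_rowsum_gt0 //.
  by rewrite -(ler_real tau_u).
move: h_sign; rewrite pmulr_lgt0 // /h -resolvent_rowsum_sqrE pmulr_lgt0 ?d2_gt0 //.
exact: ltW.
Qed.

Lemma subinvariant_no_nonneg_solution w (x : 'I_n -> C) :
  subinvariant K w -> (forall i, 0 <= x i) ->
  (forall i, x i - \sum_j K i j * x j = 1) -> False.
Proof.
case=> w_neq0 /mxOverP w_nneg wK x_ge0 xE.
have w_ge0 j : 0 <= w 0 j by rewrite -nnegrE.
have sum_w_gt0 : 0 < \sum_j w 0 j.
  rewrite lt_def sumr_ge0 // andbT; apply: contra_neq w_neq0 => /psumr_eq0P w0.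
  by apply/rowP => j; rewrite mxE w0.
have : \sum_j w 0 j = \sum_j w 0 j * x j - \sum_k (w *m K) 0 k * x k.
  transitivity (\sum_j w 0 j * (x j - \sum_k K j k * x k)).
    by apply: eq_bigr => j _; rewrite xE mulr1.
  under eq_bigr do rewrite mulrBr; rewrite sumrB; congr (_ - _).
  under eq_bigr do rewrite mulr_sumr; rewrite exchange_big /=; apply: eq_bigr => k _.
  by rewrite mxE mulr_suml; apply: eq_bigr => j _; rewrite mulrA.
move: sum_w_gt0 => /[swap] ->; rewrite subr_gt0 => /lt_geF/negbT/negP; apply.
by apply: ler_sum => k _; rewrite ler_wpM2r.
Qed.

Theorem subinvariant_eigenvalue_ge1 w :
  subinvariant K w -> exists2 t, 1 <= t & eigenvalue K t.
Proof.
move=> w_sub; have [/hasP[t]|no_eig] := boolP (has (fun t => 1 <= t) (eigenvalues K)).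
  by rewrite mem_eigenvalues; exists t.
exfalso; have d_neq0 t : 1 <= t -> (char_poly K).[t] != 0.
  move=> t_ge1; apply: contra no_eig => dt0; apply/hasP; exists t => //.
  by rewrite mem_eigenvalues eigenvalue_root_char.
set g := \prod_i adj_rowsum K i.
have root_g t : root g t = [exists i, root (adj_rowsum K i) t].
  by rewrite /root horner_prod; apply/prodf_eq0/existsP => -[i]; exists i.
have g_neq0 : g != 0.
  have mass_lt : mass < mass + 1 by rewrite ltrDl.
  have R_mass1 : mass + 1 \is Num.real by rewrite rpredD ?rpred1 ?ger0_real.
  apply/eqP => g0; move: (root_g (mass + 1)); rewrite g0 root0 => /esym/existsP[i /eqP ai].
  by move: (resolvent_rowsum_gt0 R_mass1 mass_lt i); rewrite /resolvent_rowsum ai mul0r ltxx.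
have [tau tau_ge1 [tau1_or_root last_root]] := max_root_ge g_neq0 (real1 C).
have a_noroot i t : tau < t -> ~~ root (adj_rowsum K i) t.
  by move/last_root; apply: contra => ait; rewrite root_g; apply/existsP; exists i.
have x_ge0 := resolvent_rowsum_ge0 (le_trans ler01 tau_ge1)
  (fun t tau_t => d_neq0 t (le_trans tau_ge1 tau_t)) a_noroot.
have xE i := resolvent_rowsumE i (d_neq0 tau tau_ge1).
case: tau1_or_root => [tau1|]; last rewrite root_g => /existsP[i /eqP ai].
  apply: (subinvariant_no_nonneg_solution w_sub x_ge0) => i.
  by have := xE i; rewrite tau1 mul1r.
have := xE i; rewrite {1}/resolvent_rowsum ai mul0r mulr0 sub0r => sum_eq.
have : 0 <= \sum_j K i j * resolvent_rowsum K tau j.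
  by apply: sumr_ge0 => j _; rewrite mulr_ge0.
by rewrite -oppr_le0 sum_eq ler10.
Qed.

End PerronFrobenius.

Lemma eigenvalue_mulmx_sqr (R : fieldType) n (N : 'M[R]_n) s :
  eigenvalue (N *m N) (s * s) -> eigenvalue N s || eigenvalue N (- s).
Proof.
case/eigenvalueP => v vNN v_neq0; set u := v *m N - s *: v.
have [u0|u_neq0] := eqVneq u 0.
  by apply/orP; left; apply/eigenvalueP; exists v => //; apply/eqP; rewrite -subr_eq0 -/u u0.
apply/orP; right; apply/eigenvalueP; exists u => //.
rewrite /u mulmxBl -mulmxA vNN -scalemxAl scalerBr scalerA mulNr.
by rewrite !scaleNr opprK addrC.
Qed.

Section Modulus.
Variable C : numClosedFieldType.

Lemma mxabs_nneg m n (A : 'M[C]_(m, n)) : mxabs A \is a mxOver Num.nneg.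
Proof. by apply/mxOverP => i j; rewrite mxE nnegrE normr_ge0. Qed.

Lemma norm_mulmx_le m n p (G : 'M[C]_(m, n)) (E : 'M[C]_(n, p)) i j :
  `|(G *m E) i j| <= (mxabs G *m mxabs E) i j.
Proof.
rewrite !mxE; apply: le_trans (ler_norm_sum _ _ _) _.
by apply: ler_sum => k _; rewrite !mxE normrM.
Qed.

Lemma mxabs_antidiag n (Y X : 'M[C]_n) :
  mxabs (block_mx 0 Y X 0) = block_mx 0 (mxabs Y) (mxabs X) 0.
Proof.
by rewrite /mxabs map_block_mx; congr block_mx; apply/matrixP => i j; rewrite !mxE normr0.
Qed.

Lemma eigenvalue_subinvariant n (B P : 'M[C]_n) z :
  eigenvalue B z -> 1 <= `|z| -> (forall i j, `|B i j| <= P i j) ->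
  exists w, subinvariant P w.
Proof.
case/eigenvalueP => v vB v_neq0 z_ge1 BP; exists (mxabs v); split.
- apply: contra_neq v_neq0 => v0; apply/rowP => j.
  by move: (congr1 (fun X : 'rV[C]_n => X 0 j) v0); rewrite !mxE => /normr0_eq0.
- exact: mxabs_nneg.
move=> j; rewrite mxE; apply: le_trans (ler_peMl (normr_ge0 _) z_ge1) _.
have := congr1 (fun X : 'rV[C]_n => X 0 j) vB; rewrite /= !mxE -normrM => <-.
apply: le_trans (ler_norm_sum _ _ _) _; apply: ler_sum => i _.
by rewrite normrM mxE ler_wpM2l.
Qed.

End Modulus.

Lemma antidiag_sqr (R : pzRingType) n (Y X : 'M[R]_n) :
  block_mx 0 Y X 0 *m block_mx 0 Y X 0 = block_mx (Y *m X) 0 0 (X *m Y).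
Proof. by rewrite mulmx_block !mulmx0 !mul0mx !addr0 !add0r. Qed.

Lemma subinvariant_row_mx0 (R : numDomainType) n (K L : 'M[R]_n) w :
  subinvariant L w -> subinvariant (block_mx K 0 0 L) (row_mx 0 w).
Proof.
case=> w_neq0 /mxOverP w_ge0 wL; split.
- by rewrite row_mx_eq0 negb_and w_neq0 orbT.
- by apply/mxOverP => i j; rewrite mxE; case: split_ordP => k _; rewrite ?mxE ?rpred0.
move=> j; rewrite mul_row_block !mulmx0 mul0mx !add0r.
by case: (split_ordP j) => k ->; rewrite ?row_mxEl ?row_mxEr ?wL.
Qed.

Lemma splitting_product (R : comUnitRingType) n (A M F : 'M[R]_n) :
  M \in unitmx -> F \in unitmx ->
  1%:M - invmx F *m (M + F - A) *m invmx M *m A =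
  (1%:M - invmx F *m A) *m (1%:M - invmx M *m A).
Proof.
move=> M_unit F_unit.
rewrite !(mulmxBr, mulmxBl, mulmxDr, mulmxDl) !(mul1mx, mulmx1) -!mulmxA.
rewrite mulKmx // mulKVmx // mulmxN mulNmx opprK -mulmxA.
by rewrite !opprD opprK !addrA.
Qed.

Lemma spectral_radius_sqr_ge1 (C : numClosedFieldType) n (N : 'M[C]_n) t :
  eigenvalue (N *m N) t -> 1 <= `|t| -> 1 <= spectral_radius N.
Proof.
set s := sqrtC t => NNt t_ge1.
have s_ge1 : 1 <= `|s| by rewrite -(expr_ge1 (n := 2)) // -normrX sqrtCK.
have : eigenvalue (N *m N) (s * s) by rewrite -expr2 sqrtCK.
by case/eigenvalue_mulmx_sqr/orP => /norm_eigenvalue_le; rewrite ?normrN; apply: le_trans.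
Qed.

Theorem proposition1 (C : numClosedFieldType) (n : nat) (A M F : 'M[C]_n)
  (HM : M \in unitmx) (HF : F \in unitmx) :
  spectral_radius (mxabs (block_mx 0 (1%:M - invmx M *m A)
                                   (1%:M - invmx F *m A) 0 : 'M[C]_(n + n))) < 1 ->
  spectral_radius (mxabs (1%:M - invmx F *m (M + F - A) *m invmx M *m A)) < 1.
Proof.
rewrite splitting_product //; set G := 1%:M - invmx F *m A; set E := 1%:M - invmx M *m A.
set N := mxabs (block_mx 0 E G 0) => rho_N_lt1.
rewrite real_ltNge ?ger0_real ?spectral_radius_ge0 //; apply/negP => rho_GE_ge1.
have [z GEz z_eq] := spectral_radius_eigenvalue (lt_le_trans ltr01 rho_GE_ge1).
have [w w_sub] : exists w, subinvariant (mxabs G *m mxabs E) w.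
  apply: (eigenvalue_subinvariant GEz); first by rewrite z_eq.
  by move=> i j; rewrite mxE normr_id norm_mulmx_le.
have N_nneg : N \is a mxOver Num.nneg := mxabs_nneg _.
have NN_sub : subinvariant (N *m N) (row_mx 0 w).
  by rewrite /N mxabs_antidiag antidiag_sqr; apply: subinvariant_row_mx0.
have [t t_ge1 NNt] := subinvariant_eigenvalue_ge1 (mxOverM N_nneg N_nneg) NN_sub.
have norm_t_ge1 : 1 <= `|t| by rewrite ger0_norm // (le_trans ler01 t_ge1).
have := spectral_radius_sqr_ge1 NNt norm_t_ge1.
by move/(lt_le_trans rho_N_lt1); rewrite ltxx.
Qed.
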